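(* Let $S$ be a finite semigroup in which every element has a square root (i.e. for every $x\in S$ there is $y\in S$ with $y^2=x$). Then every $x\in S$ has a square root in $\langle x\rangle=\{x,x^2,x^3,\dots\}$. *)

From mathcomp Require Import all_boot.
Set Implicit Arguments. Unset Strict Implicit. Unset Printing Implicit Defensive.

(* Positive powers in a semigroup (no identity):
   spow op x n = x^(n+1) = x * x * ... * x  (n+1 factors). *)
Fixpoint spow (T : Type) (op : T -> T -> T) (x : T) (n : nat) : T :=
  match n with
  | 0 => x
  | k.+1 => op (spow op x k) x
  end.

Definition in_monogenic (T : Type) (op : T -> T -> T) (x y : T) : Prop :=
  exists n : nat, y = spow op x n.

(* Squaring is onto by hypothesis, hence a permutation of the finite set S.
   Its orbit through x is therefore a cycle: sq^(n+1) x = x for some n, so the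
   element sq^n x = x^(2^n), which lies in <x>, is a square root of x. *)

From mathcomp Require Import all_boot zify.

Set Implicit Arguments.
Unset Strict Implicit.
Unset Printing Implicit Defensive.

Lemma fin_surj_inj (T : finType) (f : T -> T) :
  (forall y, exists x, f x = y) -> injective f.
Proof.
move=> f_surj.
have f_onto y : exists x, f x == y by have [x <-] := f_surj y; exists x.
pose g y := xchoose (f_onto y).
have gK : cancel g f by move=> y; apply/eqP; exact: (xchooseP (f_onto y)).
have g_bij : bijective g := injF_bij (can_inj gK).
exact: can_inj ((bij_can_sym g_bij f).2 gK).
Qed.

Lemma iter_fin_inj_cycle (T : finType) (f : T -> T) (x : T) :
  injective f -> exists n, f (iter n f x) = x.
Proof.
move=> f_inj; exists (order f x).-1.
by rewrite -iterS prednK ?order_gt0 // iter_order.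
Qed.

Section Semigroup.

Variables (T : Type) (op : T -> T -> T).
Hypothesis op_assoc : forall a b c : T, op a (op b c) = op (op a b) c.

Lemma spowD (x : T) (a b : nat) :
  op (spow op x a) (spow op x b) = spow op x (a + b).+1.
Proof.
elim: b => [|b IH] /=; first by rewrite addn0.
by rewrite op_assoc IH addnS.
Qed.

Lemma iter_square_spow (x : T) (n : nat) :
  iter n (fun y => op y y) x = spow op x (2 ^ n).-1.
Proof.
elim: n => [|n IH] //=; rewrite IH spowD; congr spow.
have := expn_gt0 2 n; rewrite expnS; lia.
Qed.

End Semigroup.

Theorem theorem4p8 (T : finType) (op : T -> T -> T)
  (op_assoc : forall a b c : T, op a (op b c) = op (op a b) c)
  (has_sqrt : forall x : T, exists y : T, op y y = x) :
  forall x : T, exists y : T, in_monogenic op x y /\ op y y = x.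
Proof.
move=> x.
have square_inj : injective (fun y : T => op y y) := fin_surj_inj has_sqrt.
have [n sqrt_x] := iter_fin_inj_cycle x square_inj.
exists (iter n (fun y => op y y) x); split=> //.
by exists (2 ^ n).-1; rewrite iter_square_spow.
Qed.
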